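(* Let $G=(V,E)$ be a finite simple undirected graph with a coloring $\mathcal{C}$ whose vertex color classes are $V_1,\dots,V_r$. Suppose that $(V_{\eta_1},\dots,V_{\eta_r})$, for some $\eta\in\mathfrak{S}_r$, is a color perfect elimination ordering. Write $n_i=|V_{\eta_i}|$, $N_i=\sum_{k\in[i]}n_k$, $N_0=0$, and relabel the vertices so that $V_{\eta_i}=\{N_{i-1}+1,\dots,N_i\}$ for each $i\in[r]$; define $\mathcal{Z}_G^{\mathcal{C}}$ with respect to this vertex numbering, and consider block decompositions with respect to the partition $(n_1,\dots,n_r)$ of $p=|V|$. (i) If $(G,\mathcal{C})$ is CER with respect to the ordering $(V_{\eta_1},\dots,V_{\eta_r})$, then $\mathcal{Z}_G^{\mathcal{C}}$ is a BC-space. (ii) If $(G,\mathcal{C})$ is symmetric CER with respect to the ordering $(V_{\eta_1},\dots,V_{\eta_r})$, then $\mathcal{Z}_G^{\mathcal{C}}$ is a cBC-space.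
   Context: Colored graphs: $G=(V,E)$ is a finite simple undirected graph, $V=[p]$. A coloring $\mathcal{C}$ of $G$ consists of a partition of $V$ into nonempty vertex color classes $V_1,\dots,V_r$ and a partition of $E$ into edge color classes $E_{r+1},\dots,E_{r+R}$. The extended edge set is $\tilde E=E\cup\{\{v\}:v\in V\}$; put $E_i=\{\{v\}:v\in V_i\}$ for $i\in[r]$, so $\{E_1,\dots,E_{r+R}\}$ partitions $\tilde E$. Define $c(v,w)=k$ iff $\{v,w\}\in E_k$ (for $\{v,w\}\in\tilde E$), $c(v):=c(v,v)$ (so $c(v)=i$ iff $v\in V_i$), and $c(v,w)=0$ if $v\ne w$ and $\{v,w\}\notin E$. Orderings: for an ordered partition $(V_{\eta_1},\dots,V_{\eta_r})$, $\eta\in\mathfrak{S}_r$, let $\pi(v)=i$ iff $v\in V_{\eta_i}$ and $V_{\le i}=V_{\eta_1}\cup\dots\cup V_{\eta_i}$. It is a color perfect elimination ordering (cpeo) if for every $i\in[r]$ every $v\in V_{\eta_i}$ is simplicial (its neighbours form a clique) in the induced subgraph $G[V_{\eta_i}\cup\dots\cup V_{\eta_r}]$. For $\{v,w\}\in\tilde E$ and $k,h\in[r+R]$ set $m_{v\to w}(k,h)=|\{u\in V_{\le \min(\pi(v),\pi(w))}: c(v,u)=k,\ c(u,w)=h\}|$ and $m_{v\leftrightarrow w}(k,h)=m_{v\to w}(k,h)+m_{v\to w}(h,k)$. Let $F_i=\{c(v,w):\{v,w\}\in\tilde E,\ c(v)=c(w)=i\}$ and $F=\bigcup_{i}F_i$.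 (M1): for all $\{v,w\},\{v',w'\}\in\tilde E$, $c(v,w)=c(v',w')$ implies $m_{v\leftrightarrow w}=m_{v'\leftrightarrow w'}$ (as functions on $[r+R]^2$). (M2): for all $v,w\in V$ with $c(v)=c(w)$, $m_{v\to w}(k,h)=m_{w\to v}(k,h)$ for all $k,h\in F$. $(G,\mathcal{C})$ is CER with respect to an ordering if the ordering is a cpeo and (M1) holds for it; symmetric CER if in addition (M2) holds for it. Matrix spaces: $\mathcal{Z}_G=\{x\in\mathrm{Sym}(p): x_{ij}=0$ whenever $i\ne j$ and $\{i,j\}\notin E\}$ and $\mathcal{Z}_G^{\mathcal{C}}=\{x\in\mathcal{Z}_G: x_{ij}=x_{kl}$ whenever $\{i,j\},\{k,l\}\in\tilde E$ and $c(i,j)=c(k,l)\}$. BC-spaces: given an ordered partition $(n_1,\dots,n_r)$ of $p$, write $x\in\mathrm{Sym}(p)$ in blocks $X_{kh}\in\mathbb{R}^{n_k\times n_h}$. $\mathrm{BlockTri}(x)$ keeps the blocks $X_{kh}$ with $k\ge h$ and sets the others to zero; $\mathrm{BlockDiag}(x)$ keeps only the blocks $X_{kk}$. For a linear subspace $\mathcal{Z}\subset\mathrm{Sym}(p)$: $M_i(\mathcal{Z})=\{x\in\mathcal{Z}: X_{kh}=0$ unless $(k,h)=(i,i)\}$, $L_i(\mathcal{Z})=\{x\in\mathcal{Z}: X_{kh}=0$ unless $k>h=i$ or $h>k=i\}$. $\mathcal{Z}$ is a BC-space if (Z0) $I_p\in\mathcal{Z}$ and $\mathcal{Z}=(\bigoplus_{i\in[r]}M_i(\mathcal{Z}))\oplus(\bigoplus_{i\in[r-1]}L_i(\mathcal{Z}))$,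 and (Z1) $\mathrm{BlockTri}(x)\mathrm{BlockTri}(x)^\top\in\mathcal{Z}$ for all $x\in\mathcal{Z}$. It is a cBC-space if moreover (Z2) $\mathrm{BlockDiag}(x)\mathrm{BlockDiag}(y)\in\mathcal{Z}$ for all $x,y\in\mathcal{Z}$. *)

From mathcomp Require Import all_boot all_order all_algebra all_fingroup.
Set Implicit Arguments. Unset Strict Implicit. Unset Printing Implicit Defensive.
Import GRing.Theory Num.Theory.


Section ColoredGraph.
Variables (p r R : nat).
Variable e : rel 'I_p.
(* vertex colors 0..r-1 (paper: 1..r), edge colors 0..R-1 (paper: r+1..r+R) *)
Variable vc : 'I_p -> 'I_r.
Variable ec : 'I_p -> 'I_p -> 'I_R.

Definition is_colored_graph : Prop :=
  [/\ symmetric e, irreflexive e,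
      (forall i : 'I_r, exists v, vc v = i),
      (forall v w, e v w -> ec v w = ec w v) &
      (forall k : 'I_R, exists v w, e v w /\ ec v w = k)].

Definition inEt (v w : 'I_p) : bool := (v == w) || e v w.

(* c(v,w) with the paper's numbering: vertex colors 1..r, edge colors
   r+1..r+R, and 0 for distinct nonadjacent vertices. *)
Definition col (v w : 'I_p) : nat :=
  if v == w then (vc v).+1 else if e v w then r + (ec v w).+1 else 0.

Variable eta : {perm 'I_r}.
(* pi(v) = i iff v in V_{eta_i}  (0-based positions) *)
Definition pos (v : 'I_p) : 'I_r := (eta^-1)%g (vc v).

Definition cpeo : Prop :=
  forall v u w : 'I_p, pos v <= pos u -> pos v <= pos w ->
    e v u -> e v w -> u != w -> e u w.

Definition mcount (v w : 'I_p) (k h : nat) : nat :=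
  #|[set u : 'I_p | [&& (pos u <= minn (pos v) (pos w))%N,
                        col v u == k & col u w == h]]|.

Definition mcount2 v w k h := (mcount v w k h + mcount v w h k)%N.

Definition M1 : Prop :=
  forall v w v' w', inEt v w -> inEt v' w' -> col v w = col v' w' ->
    forall k h : nat, (0 < k <= r + R)%N -> (0 < h <= r + R)%N ->
      mcount2 v w k h = mcount2 v' w' k h.

Definition inF (k : nat) : Prop :=
  exists v w, inEt v w /\ vc v = vc w /\ col v w = k.

Definition M2 : Prop :=
  forall v w : 'I_p, vc v = vc w ->
    forall k h, inF k -> inF h -> mcount v w k h = mcount w v k h.

Definition CER : Prop := cpeo /\ M1.
Definition symCER : Prop := [/\ cpeo, M1 & M2].

(* block sizes n_i = |V_{eta_i}| (0-based i; 0 for i >= r) *)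
Definition nsz (i : nat) : nat := #|[set v : 'I_p | (pos v : nat) == i]|.
Definition Nsum (i : nat) : nat := \sum_(k < i) nsz k.

(* sigma relabels vertex v as sigma v, so that V_{eta_i} becomes the
   contiguous block {N_{i-1}, ..., N_i - 1} (0-based). *)
Definition good_relabeling (sigma : {perm 'I_p}) : Prop :=
  forall v, (Nsum (pos v) <= sigma v < Nsum (pos v).+1)%N.

Definition ZGC (F : fieldType) (sigma : {perm 'I_p}) (x : 'M[F]_p) : Prop :=
  [/\ (x^T)%R = x,
      (forall v w, v != w -> ~~ e v w -> x (sigma v) (sigma w) = 0%R) &
      (forall v w v' w', inEt v w -> inEt v' w' -> col v w = col v' w' ->
         x (sigma v) (sigma w) = x (sigma v') (sigma w'))].

End ColoredGraph.

Section BC.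
Variables (F : fieldType) (p r : nat).
Variable n : nat -> nat.
Definition bsum (i : nat) : nat := \sum_(k < i) n k.
(* index (0-based) of the block containing row/column a *)
Definition blk (a : 'I_p) : nat := #|[set i : 'I_r | (bsum i.+1 <= a)%N]|.

Definition BlockTri (x : 'M[F]_p) : 'M[F]_p :=
  \matrix_(a, b) (if (blk b <= blk a)%N then x a b else 0%R).
Definition BlockDiag (x : 'M[F]_p) : 'M[F]_p :=
  \matrix_(a, b) (if blk a == blk b then x a b else 0%R).

Variable Z : 'M[F]_p -> Prop.

Definition Mi (i : nat) (x : 'M[F]_p) : Prop :=
  Z x /\ forall a b, ~ (blk a = i /\ blk b = i) -> x a b = 0%R.
Definition Li (i : nat) (x : 'M[F]_p) : Prop :=
  Z x /\ forall a b,
    ~ ((blk b < blk a /\ blk b = i) \/ (blk a < blk b /\ blk a = i))%N ->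
    x a b = 0%R.

(* (Z0): I in Z and Z = (+)_{i in [r]} M_i(Z) (+) (+)_{i in [r-1]} L_i(Z) *)
Definition Z0 : Prop :=
  [/\ Z 1%:M%R,
      (forall x, Z x -> exists (m l : 'I_r -> 'M[F]_p),
          [/\ forall i : 'I_r, Mi i (m i), forall i : 'I_r, Li i (l i) &
              x = (\sum_i m i + \sum_(i : 'I_r | (i.+1 < r)%N) l i)%R]),
      (forall (m l : 'I_r -> 'M[F]_p), (forall i : 'I_r, Mi i (m i)) ->
          (forall i : 'I_r, Li i (l i)) ->
          Z (\sum_i m i + \sum_(i : 'I_r | (i.+1 < r)%N) l i)%R) &
      (forall (m l : 'I_r -> 'M[F]_p), (forall i : 'I_r, Mi i (m i)) ->
          (forall i : 'I_r, Li i (l i)) ->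
          (\sum_i m i + \sum_(i : 'I_r | (i.+1 < r)%N) l i = 0)%R ->
          (forall i : 'I_r, m i = 0%R) /\ (forall i : 'I_r, (i.+1 < r)%N -> l i = 0%R))].

Definition Z1 : Prop :=
  forall x, Z x -> Z (BlockTri x *m (BlockTri x)^T)%R.
Definition Z2 : Prop :=
  forall x y, Z x -> Z y -> Z (BlockDiag x *m BlockDiag y)%R.

Definition BC_space : Prop := Z0 /\ Z1.
Definition cBC_space : Prop := [/\ Z0, Z1 & Z2].
End BC.

From Pilot Require Import Defs.
From mathcomp Require Import all_boot all_order all_algebra all_fingroup.
From mathcomp Require Import zify.
Set Implicit Arguments. Unset Strict Implicit. Unset Printing Implicit Defensive.
Import GRing.Theory Num.Theory.

(* Let x_k denote the common value of x on the edges of colour k.  The entry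
   at (v, w) of BlockTri x * (BlockTri x)^T is the sum of x_(v u) x_(u w) over the vertices
   u in a block no later than those of v and w, that is, the sum over k and h of
   x_k x_h m_{v->w}(k, h).  The same holds for BlockDiag x * BlockDiag y when v and w share a
   block, provided x_k and y_h are replaced by 0 for colours outside F.  The cpeo kills
   this sum when {v, w} is not an edge.  Adding the sum with x and y exchanged yields the
   coefficients m_{v<->w}, so (M1) makes the doubled entry depend only on c(v, w); the
   exchange is harmless for x = y, and for BlockDiag it is exactly what (M2) provides.
   For (Z0), (M1) with k a vertex colour shows that the colour of an edge determines
   whether its ends lie in one block and which of their blocks comes first, so cutting
   x into its block pieces stays inside Z_G^C. *)

Lemma bsum_mono n i j : i <= j -> bsum n i <= bsum n j.
Proof.
move=> ij; rewrite /bsum -!(big_mkord xpredT) [X in _ <= X](@big_cat_nat _ _ _ i) //=.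
exact: leq_addr.
Qed.

Lemma card_ord_lt r k : k <= r -> #|[set i : 'I_r | i < k]| = k.
Proof.
move=> kr; have -> : [set i : 'I_r | i < k] = widen_ord kr @: [set: 'I_k].
  apply/setP => i; rewrite inE; apply/idP/imsetP => [ik | [j _ ->] /=]; last exact: ltn_ord.
  by exists (Ordinal ik) => //; apply: val_inj.
by rewrite card_imset ?cardsT ?card_ord // => a b /(congr1 val) ab; exact: val_inj.
Qed.

Lemma sum_ord_if_eq (V : nmodType) n c (G : nat -> V) : c < n ->
  (\sum_(k < n) (if c == k then G k else 0) = G c)%R.
Proof.
move=> c_lt; rewrite -big_mkcond (eq_bigl (fun k : 'I_n => k == c :> nat)).
  by rewrite big_ord1_eq c_lt.
by move=> k; rewrite eq_sym.
Qed.

Section ColoredGraph.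
Variables (p r R : nat) (e : rel 'I_p) (vc : 'I_p -> 'I_r)
  (ec : 'I_p -> 'I_p -> 'I_R) (eta : {perm 'I_r}).
Hypothesis e_sym : symmetric e.
Hypothesis ec_sym : forall v w, e v w -> ec v w = ec w v.

Local Notation col := (Defs.col e vc ec).
Local Notation pos := (Defs.pos vc eta).
Local Notation mcount := (Defs.mcount e vc ec eta).
Local Notation mcount2 := (Defs.mcount2 e vc ec eta).

Definition ncolors := (r + R).+1.

Lemma col_sym v w : col v w = col w v.
Proof.
rewrite /Defs.col eq_sym e_sym; case: eqP => [->|_] //.
by case E: (e w v) => //; rewrite ec_sym // e_sym.
Qed.

Lemma col_lt v w : col v w < ncolors.
Proof.
rewrite /Defs.col /ncolors; case: eqP => _; first by have := ltn_ord (vc v); lia.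
by case: (e v w) => //; have := ltn_ord (ec v w); lia.
Qed.

Lemma col_gt0 v w : (0 < col v w) = inEt e v w.
Proof. by rewrite /inEt /Defs.col; case: (v =P w) => //= _; case: (e v w); rewrite ?addnS. Qed.

Lemma col_eq0 v w : ~~ inEt e v w -> col v w = 0.
Proof. by rewrite -col_gt0 lt0n negbK => /eqP. Qed.

Lemma col_eq_vertex v u (i : 'I_r) : (col v u == i.+1) = (u == v) && (vc v == i).
Proof.
rewrite /Defs.col [u == v]eq_sym; case: (v =P u) => [->|_] /=; first by rewrite eqSS.
by case: (e v u) => //; apply/negbTE; have := ltn_ord i; lia.
Qed.

Lemma mcount_swap v w k h : mcount w v k h = mcount v w h k.
Proof.
rewrite /Defs.mcount minnC; apply: eq_card => u; rewrite !inE.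
by rewrite [col w u]col_sym [col u v]col_sym; case: (_ <= _) => //=; rewrite andbC.
Qed.

Lemma mcount_vertex v w (i : 'I_r) h :
  mcount v w i.+1 h = [&& vc v == i, pos v <= pos w & col v w == h] :> nat.
Proof.
set C := [&& _, _ & _]; rewrite /Defs.mcount (_ : [set u | _] = [set u | (u == v) && C]).
  by case: C => /=; [rewrite -(cards1 v) | rewrite -(cards0 'I_p)];
    apply: eq_card => u; rewrite !inE ?andbT ?andbF.
apply/setP => u; rewrite !inE col_eq_vertex.
case: (u =P v) => [->|_]; rewrite ?andbF //= leq_min (leqnn (pos v)) /C /=.
by rewrite andbCA.
Qed.

Lemma vc_eq_eta v (j : 'I_r) : (vc v == eta j) = (pos v == j).
Proof. by rewrite /Defs.pos (can2_eq (permKV eta) (permK eta)). Qed.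

Lemma pos_eqE v w : (pos v == pos w :> nat) = (vc v == vc w).
Proof. by rewrite (inj_eq val_inj) (inj_eq perm_inj). Qed.

Definition lowpos v w : 'I_r := if pos v <= pos w then pos v else pos w.

Lemma lowposE v w : lowpos v w = minn (pos v) (pos w) :> nat.
Proof. by rewrite /lowpos; case: leqP => [/minn_idPl | /ltnW/minn_idPr]. Qed.

Lemma mcount2_vertex v w (j : 'I_r) :
  mcount2 v w (eta j).+1 (col v w) = (j == lowpos v w) * (pos v == pos w :> nat).+1.
Proof.
rewrite /Defs.mcount2 -[mcount v w (col v w) _]mcount_swap !mcount_vertex col_sym.
rewrite eqxx !andbT !vc_eq_eta /lowpos.
by case: ltngtP => [_|_|/val_inj->]; rewrite !andbT ?andbF eq_sym; case: (j == _).
Qed.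

Lemma M1_col_pattern : M1 e vc ec eta -> forall v w v' w',
  inEt e v w -> inEt e v' w' -> col v w = col v' w' ->
  (pos v == pos w :> nat) = (pos v' == pos w' :> nat) /\ lowpos v w = lowpos v' w'.
Proof.
move=> HM1 v w v' w' vw v'w' c_eq.
have := mcount2_vertex v w (lowpos v w); rewrite eqxx mul1n.
rewrite (HM1 v w v' w') // ?c_eq ?mcount2_vertex; first last.
- by rewrite col_gt0 v'w'; exact: col_lt.
- exact: ltn_addr.
by case: eqP => // ->; case: (pos v == _ :> nat); case: (pos v' == _ :> nat).
Qed.

Lemma cpeo_no_low_path : cpeo e vc eta -> forall v w u,
  v != w -> ~~ e v w -> pos u <= pos v -> pos u <= pos w ->
  ~~ (inEt e v u && inEt e u w).
Proof.
move=> Hcpeo v w u vw evw uv uw; apply/negP; rewrite /inEt.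
case: (v =P u) => [<-|vu] /=; first by rewrite (negbTE vw) (negbTE evw).
case: (u =P w) => [->|uw'] /=; first by rewrite (negbTE evw).
rewrite e_sym => /andP [euv euw].
by move: evw; rewrite (Hcpeo u v w uv uw euv euw) //; apply/eqP.
Qed.

Variable F : numFieldType.
Local Open Scope ring_scope.

Definition conv (f g : nat -> F) v w : F :=
  \sum_u (if (pos u <= minn (pos v) (pos w))%N then f (col v u) * g (col u w) else 0).

Lemma conv_mcount f g v w :
  conv f g v w = \sum_(k < ncolors) \sum_(h < ncolors) (f k * g h) *+ mcount v w k h.
Proof.
transitivity (\sum_u \sum_(k < ncolors) \sum_(h < ncolors)
  (if [&& pos u <= minn (pos v) (pos w), col v u == k & col u w == h]%N then f k * g h else 0)).
  apply: eq_bigr => u _; case: ifP => _ /=; last by rewrite big1 // => k _; rewrite big1.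
  rewrite -(sum_ord_if_eq (fun k => f k * g (col u w)) (col_lt v u)); apply: eq_bigr => k _.
  by case: (_ == _) => /=; rewrite ?(sum_ord_if_eq (fun h => f k * g h)) ?col_lt ?big1_eq.
rewrite exchange_big; apply: eq_bigr => k _; rewrite exchange_big; apply: eq_bigr => h _.
by rewrite -big_mkcond sumr_const /Defs.mcount cardsE.
Qed.

Lemma conv_add_swap f g v w : conv f g v w + conv g f v w =
  \sum_(k < ncolors) \sum_(h < ncolors) (f k * g h) *+ mcount2 v w k h.
Proof.
rewrite !conv_mcount [in X in _ + X]exchange_big -big_split; apply: eq_bigr => k _.
by rewrite -big_split; apply: eq_bigr => h _; rewrite [g h * f k]mulrC /Defs.mcount2 mulrnDr.
Qed.

Lemma conv_nonedge f g : f 0%N = 0 -> g 0%N = 0 -> cpeo e vc eta ->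
  forall v w, v != w -> ~~ e v w -> conv f g v w = 0.
Proof.
move=> f0 g0 Hcpeo v w vw evw; apply: big1 => u _; case: ifP => //.
rewrite leq_min => /andP [uv uw].
case/nandP: (cpeo_no_low_path Hcpeo vw evw uv uw) => /col_eq0 ->;
  by rewrite ?f0 ?g0 ?mul0r ?mulr0.
Qed.

Lemma conv_col_invariant f g : f 0%N = 0 -> g 0%N = 0 -> M1 e vc ec eta ->
  forall v w v' w', conv f g v w = conv g f v w -> conv f g v' w' = conv g f v' w' ->
  inEt e v w -> inEt e v' w' -> col v w = col v' w' -> conv f g v w = conv f g v' w'.
Proof.
move=> f0 g0 HM1 v w v' w' fg fg' vw v'w' c_eq.
(* (M1) only controls m_{v<->w}, the symmetrization of m_{v->w}; hence the doubling. *)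
apply: (@pmulrnI _ 2) => //.
rewrite !mulr2n {2}fg {2}fg' !conv_add_swap; apply: eq_bigr => k _; apply: eq_bigr => h _.
have [-> | k0] := eqVneq (k : nat) 0%N; first by rewrite f0 mul0r !mul0rn.
have [-> | h0] := eqVneq (h : nat) 0%N; first by rewrite g0 mulr0 !mul0rn.
by rewrite (HM1 v w v' w') // lt0n ?k0 ?h0 -ltnS ltn_ord.
Qed.

Lemma conv_swap_M2 f g : M2 e vc ec eta ->
  (forall k, f k != 0 -> inF e vc ec k) -> (forall h, g h != 0 -> inF e vc ec h) ->
  forall v w, vc v = vc w -> conv f g v w = conv g f v w.
Proof.
move=> HM2 fF gF v w vw; rewrite !conv_mcount [RHS]exchange_big.
apply: eq_bigr => k _; apply: eq_bigr => h _.
have [-> | /fF Fk] := eqVneq (f k) 0; first by rewrite mul0r mulr0 !mul0rn.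
have [-> | /gF Fh] := eqVneq (g h) 0; first by rewrite mul0r mulr0 !mul0rn.
by rewrite mulrC (HM2 v w vw) // mcount_swap.
Qed.

Variable sigma : {perm 'I_p}.
Hypothesis sigma_good : good_relabeling vc eta sigma.
Hypothesis HM1 : M1 e vc ec eta.

Local Notation nn := (nsz vc eta).
Local Notation blk := (Defs.blk r nn).
Local Notation ZG := (ZGC e vc ec (F:=F) sigma).

Lemma blk_sigma v : blk (sigma v) = pos v.
Proof.
have [lo hi] := andP (sigma_good v).
rewrite /Defs.blk -[RHS](card_ord_lt (ltnW (ltn_ord (pos v)))).
apply: eq_card => i; rewrite !inE; case: (ltnP i (pos v)) => ip.
  exact: leq_trans (bsum_mono _ ip) lo.
by apply/negbTE; rewrite -ltnNge (leq_trans hi) ?bsum_mono.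
Qed.

Lemma matrix_sigmaP (A B : 'M[F]_p) :
  (forall v w, A (sigma v) (sigma w) = B (sigma v) (sigma w)) -> A = B.
Proof. by move=> AB; apply/matrixP => a b; rewrite -(permKV sigma a) -(permKV sigma b). Qed.

Definition colval (x : 'M[F]_p) (k : nat) : F :=
  if [pick ab : 'I_p * 'I_p | inEt e ab.1 ab.2 && (col ab.1 ab.2 == k)] is Some ab
  then x (sigma ab.1) (sigma ab.2) else 0.

Lemma colval0 x : colval x 0 = 0.
Proof.
by rewrite /colval; case: pickP => // -[a b] /andP [/=]; rewrite -col_gt0 => /gtn_eqF ->.
Qed.

Lemma ZGC_colval x : ZG x -> forall v w, x (sigma v) (sigma w) = colval x (col v w).
Proof.
case=> _ x0 xcol v w; have [vw | nvw] := boolP (inEt e v w).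
  rewrite /colval; case: pickP => [[a b] /andP [/= ab /eqP c_eq] | /(_ (v, w))].
    exact: xcol.
  by rewrite /= vw eqxx.
by rewrite col_eq0 // colval0 x0 //; move: nvw; rewrite negb_or => /andP [].
Qed.

Lemma ZGC_sym x : ZG x -> forall a b, x a b = x b a.
Proof. by case=> xT _ _ a b; rewrite -{1}xT mxE. Qed.

Lemma ZGC1 : ZG 1%:M.
Proof.
have col_vertex v w : inEt e v w -> (v == w) = (col v w <= r)%N.
  rewrite /inEt /Defs.col; case: eqP => [_ _ | _ /= ->]; first by rewrite ltn_ord.
  by rewrite addnS ltnNge leq_addr.
split=> [|v w vw _ | v w v' w' vw v'w' c_eq]; first exact: tr_scalar_mx.
  by rewrite mxE (inj_eq perm_inj) (negbTE vw).
by rewrite !mxE !(inj_eq perm_inj) (col_vertex _ _ vw) (col_vertex _ _ v'w') c_eq.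
Qed.

Lemma ZGC0 : ZG 0.
Proof. by split=> [|*|*]; rewrite ?trmx0 ?mxE. Qed.

Lemma ZGC_add x y : ZG x -> ZG y -> ZG (x + y).
Proof.
case=> xT x0 xc [yT y0 yc]; split=> [|v w *| v w v' w' vw v'w' c_eq].
- by rewrite linearD /= xT yT.
- by rewrite mxE x0 // y0 // addr0.
by rewrite !mxE (xc _ _ _ _ vw v'w' c_eq) (yc _ _ _ _ vw v'w' c_eq).
Qed.

Lemma ZGC_sum (I : finType) (P : pred I) (f : I -> 'M[F]_p) :
  (forall i, P i -> ZG (f i)) -> ZG (\sum_(i | P i) f i).
Proof. by apply: big_ind; [exact: ZGC0 | exact: ZGC_add]. Qed.

Lemma BlockTri_gram_entry x : ZG x -> forall v w,
  (BlockTri r nn x *m (BlockTri r nn x)^T) (sigma v) (sigma w) =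
  conv (colval x) (colval x) v w.
Proof.
move=> xZ v w; rewrite mxE (reindex_inj (@perm_inj _ sigma)) /=; apply: eq_bigr => u _.
rewrite !mxE !blk_sigma leq_min !(ZGC_colval xZ) [col w u]col_sym.
by case: ifP; case: ifP; rewrite ?mulr0 ?mul0r.
Qed.

Lemma Z1_ZGC : cpeo e vc eta -> Z1 r nn ZG.
Proof.
move=> Hcpeo x xZ; split=> [| v w vw evw | v w v' w' vw v'w' c_eq].
- by rewrite trmx_mul trmxK.
- by rewrite BlockTri_gram_entry // conv_nonedge ?colval0.
by rewrite !BlockTri_gram_entry //; apply: (conv_col_invariant _ _ HM1 _ _ vw v'w' c_eq);
  rewrite ?colval0.
Qed.

Definition inFb (k : nat) : bool :=
  [exists ab : 'I_p * 'I_p, [&& inEt e ab.1 ab.2, vc ab.1 == vc ab.2 & col ab.1 ab.2 == k]].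

Lemma inFP k : reflect (inF e vc ec k) (inFb k).
Proof.
apply: (iffP existsP) => [[[a b] /and3P [/= ab /eqP abc /eqP c_eq]] | [a [b [ab [abc c_eq]]]]].
  by exists a, b.
by exists (a, b); rewrite /= ab abc c_eq !eqxx.
Qed.

Definition intraval (x : 'M[F]_p) (k : nat) : F := if inFb k then colval x k else 0.

Lemma intraval0 x : intraval x 0 = 0.
Proof. by rewrite /intraval colval0 if_same. Qed.

Lemma intraval_supp x k : intraval x k != 0 -> inF e vc ec k.
Proof. by rewrite /intraval; case: inFP => // _; rewrite eqxx. Qed.

Lemma intraval_same x v w : vc v = vc w -> intraval x (col v w) = colval x (col v w).
Proof.
move=> vw; rewrite /intraval; case: inFP => // nF.
have [vw' | nvw] := boolP (inEt e v w); last by rewrite col_eq0 ?colval0.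
by case: nF; exists v, w.
Qed.

Lemma intraval_cross x v w : vc v != vc w -> intraval x (col v w) = 0.
Proof.
move=> vw; rewrite /intraval; case: inFP => // -[a [b [ab [abc c_eq]]]].
have [vw' | nvw] := boolP (inEt e v w); last by rewrite col_eq0 ?colval0.
have [samepos _] := M1_col_pattern HM1 ab vw' c_eq.
by move: vw; rewrite -pos_eqE -samepos pos_eqE abc eqxx.
Qed.

Lemma BlockDiag_mul_entry x z : ZG x -> ZG z -> forall v w,
  (BlockDiag r nn x *m BlockDiag r nn z) (sigma v) (sigma w) =
  if vc v == vc w then conv (intraval x) (intraval z) v w else 0.
Proof.
move=> xZ zZ v w; rewrite mxE (reindex_inj (@perm_inj _ sigma)) /=.
case: ifP => [/eqP vw | vw]; last first.
  apply: big1 => u _; rewrite !mxE !blk_sigma !pos_eqE.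
  by case: (vc v =P vc u) => [<-|]; rewrite ?vw ?mulr0 ?mul0r.
apply: eq_bigr => u _; rewrite !mxE !blk_sigma !pos_eqE -vw (ZGC_colval xZ) (ZGC_colval zZ).
have [vu | vu] := eqVneq (vc v) (vc u); last by rewrite intraval_cross // !mul0r if_same.
have pu : pos u = pos v by rewrite /Defs.pos vu.
have pw : pos w = pos v by rewrite /Defs.pos vw.
by rewrite pu pw minnn leqnn !intraval_same // -vw -vu.
Qed.

Lemma Z2_ZGC : cpeo e vc eta -> M2 e vc ec eta -> Z2 r nn ZG.
Proof.
move=> Hcpeo HM2 x z xZ zZ.
have BD_tr y : ZG y -> (BlockDiag r nn y)^T = BlockDiag r nn y.
  by move=> yZ; apply/matrixP => a b; rewrite !mxE eq_sym (ZGC_sym yZ).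
have intraval_swap y y' v w : vc v = vc w ->
    conv (intraval y) (intraval y') v w = conv (intraval y') (intraval y) v w.
  by apply: conv_swap_M2 => // k; apply: intraval_supp.
split=> [| v w vw evw | v w v' w' vw v'w' c_eq].
- rewrite trmx_mul !BD_tr //; apply: matrix_sigmaP => v w.
  by rewrite !BlockDiag_mul_entry //; case: eqP => // /intraval_swap.
- by rewrite BlockDiag_mul_entry //; case: ifP => // _; rewrite conv_nonedge ?intraval0.
have [same _] := M1_col_pattern HM1 vw v'w' c_eq; rewrite !pos_eqE in same.
rewrite !BlockDiag_mul_entry // -same; case: (vc v =P vc w) => // vcvw.
have vcvw' : vc v' = vc w' by apply/eqP; rewrite -same; apply/eqP.
apply: (conv_col_invariant _ _ HM1 _ _ vw v'w' c_eq); rewrite ?intraval0 //;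
  exact: intraval_swap.
Qed.

Definition blockpart (diag : bool) (i : nat) (x : 'M[F]_p) : 'M[F]_p :=
  \matrix_(a, b) if ((blk a == blk b) == diag) && (minn (blk a) (blk b) == i)%N
                 then x a b else 0.

Lemma blockpart_ZGC diag i x : ZG x -> ZG (blockpart diag i x).
Proof.
move=> xZ; case: (xZ) => _ x0 xc; split=> [| v w vw evw | v w v' w' vw v'w' c_eq].
- by apply/matrixP => a b; rewrite !mxE [blk b == _]eq_sym minnC (ZGC_sym xZ).
- by rewrite mxE x0 // if_same.
have [same low] := M1_col_pattern HM1 vw v'w' c_eq.
by rewrite !mxE !blk_sigma -!lowposE same low (xc _ _ _ _ vw v'w' c_eq).
Qed.

Lemma Mi_blockpart i x : ZG x -> Mi r nn ZG i (blockpart true i x).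
Proof.
move=> xZ; split=> [|a b]; first exact: blockpart_ZGC.
by rewrite mxE eqb_id; case: ifP => // /andP [/eqP ab /eqP abi] []; split; lia.
Qed.

Lemma Li_blockpart i x : ZG x -> Li r nn ZG i (blockpart false i x).
Proof.
move=> xZ; split=> [|a b]; first exact: blockpart_ZGC.
by rewrite mxE eqbF_neg; case: ifP => // /andP [/eqP ab /eqP abi] []; lia.
Qed.

Lemma Mi_entry (i : 'I_r) x : Mi r nn ZG i x ->
  forall v w, ~~ ((pos v == i) && (pos w == i)) -> x (sigma v) (sigma w) = 0.
Proof.
move=> [_ x0] v w viw; apply: x0; rewrite !blk_sigma => -[vi wi].
by move: viw; rewrite -!(inj_eq val_inj) /= vi wi eqxx.
Qed.

Lemma Li_entry (i : 'I_r) x : Li r nn ZG i x ->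
  forall v w, ~~ ((pos v != pos w) && (lowpos v w == i)) -> x (sigma v) (sigma w) = 0.
Proof.
move=> [_ x0] v w viw; apply: x0; rewrite !blk_sigma => vwi; move: viw.
rewrite -!(inj_eq val_inj) /= lowposE; lia.
Qed.

Lemma blocksum_entry (m l : 'I_r -> 'M[F]_p) :
  (forall i : 'I_r, Mi r nn ZG i (m i)) -> (forall i : 'I_r, Li r nn ZG i (l i)) ->
  forall v w, (\sum_i m i + \sum_(i : 'I_r | (i.+1 < r)%N) l i) (sigma v) (sigma w) =
    if pos v == pos w then m (pos v) (sigma v) (sigma w) else l (lowpos v w) (sigma v) (sigma w).
Proof.
move=> Hm Hl v w; rewrite mxE !summxE.
have [vw | vw] := eqVneq (pos v) (pos w).
  rewrite (bigD1 (pos v)) //= big1 ?addr0 => [|i iv]; last first.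
    by apply: (Mi_entry (Hm i)); rewrite eq_sym (negbTE iv).
  by rewrite big1 ?addr0 // => i _; apply: (Li_entry (Hl i)); rewrite vw eqxx.
rewrite big1 ?add0r => [|i _]; last first.
  by apply: (Mi_entry (Hm i)); apply: contra vw => /andP [/eqP-> /eqP->].
rewrite (bigD1 (lowpos v w)) /=; last first.
  have vw' : (pos v : nat) != pos w := vw.
  by rewrite /= lowposE; have := ltn_ord (pos v); have := ltn_ord (pos w); lia.
rewrite big1 ?addr0 // => i /andP [_ iv]; apply: (Li_entry (Hl i)).
by rewrite vw eq_sym (negbTE iv).
Qed.

Lemma Z0_ZGC : Z0 r nn ZG.
Proof.
split=> [| x xZ | m l Hm Hl | m l Hm Hl sum0].
- exact: ZGC1.
- exists (fun i => blockpart true i x), (fun i => blockpart false i x).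
  have Hm i : Mi r nn ZG i (blockpart true i x) by exact: Mi_blockpart.
  have Hl i : Li r nn ZG i (blockpart false i x) by exact: Li_blockpart.
  split=> //; apply: matrix_sigmaP => v w; rewrite blocksum_entry //.
  have [vw | vw] := eqVneq (pos v) (pos w); rewrite !mxE !blk_sigma val_eqE.
    by rewrite vw !eqxx minnn eqxx.
  by rewrite (negbTE vw) -lowposE !eqxx.
- by apply: ZGC_add; apply: ZGC_sum => i _; [exact: (Hm i).1 | exact: (Hl i).1].
split=> [i | i _]; apply: matrix_sigmaP => v w; rewrite mxE.
  have [/andP [/eqP vi /eqP wi] | viw] := boolP ((pos v == i) && (pos w == i)).
    by have := blocksum_entry Hm Hl v w; rewrite sum0 mxE vi wi eqxx.
  exact: (Mi_entry (Hm i)).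
have [/andP [vw /eqP vwi] | vwi] := boolP ((pos v != pos w) && (lowpos v w == i)).
  by have := blocksum_entry Hm Hl v w; rewrite sum0 mxE (negbTE vw) vwi.
exact: (Li_entry (Hl i)).
Qed.
End ColoredGraph.

Theorem theorem4p2 (F : realFieldType) (p r R : nat) (e : rel 'I_p)
  (vc : 'I_p -> 'I_r) (ec : 'I_p -> 'I_p -> 'I_R)
  (eta : {perm 'I_r}) (sigma : {perm 'I_p}) :
  is_colored_graph e vc ec ->
  cpeo e vc eta ->
  good_relabeling vc eta sigma ->
  (CER e vc ec eta ->
     BC_space r (nsz vc eta) (ZGC e vc ec (F:=F) sigma)) /\
  (symCER e vc ec eta ->
     cBC_space r (nsz vc eta) (ZGC e vc ec (F:=F) sigma)).
Proof.
case=> e_sym _ _ ec_sym _ Hcpeo sigma_good; split.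
- by case=> _ HM1; split; [exact: Z0_ZGC | exact: Z1_ZGC].
- by case=> _ HM1 HM2; split; [exact: Z0_ZGC | exact: Z1_ZGC | exact: Z2_ZGC].
Qed.
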